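(* Let $\Lambda_n$ ($n\in\mathbb{N}$) be continuous, causal, identifiable in-context maps $\mathrm{Lip}_C^\sigma(\tilde\Omega)\times\tilde\Omega\to\mathbb{R}^{d'}$ and let $\Lambda^*:\mathrm{Lip}_C^\sigma(\tilde\Omega)\times\tilde\Omega\to\mathbb{R}^{d'}$ be continuous and causal. If $\sup_{(\mu,x,t)\in\mathrm{Lip}_C^\sigma(\tilde\Omega)\times\tilde\Omega}|\Lambda_n(\mu,x,t)-\Lambda^*(\mu,x,t)|\to0$ as $n\to\infty$, then $\Lambda^*$ is identifiable.
   Context: $\Omega\subset\mathbb{R}^d$ compact, $\tilde\Omega=\Omega\times[0,1]$, $C>0$, $\sigma\in(0,1)$, $\bar\mu$ the time marginal. $\mathrm{Lip}_C^\sigma(\tilde\Omega)$: all $\mu\in\mathcal{P}(\tilde\Omega)$ with $\bar\mu(\{0\})\ge\sigma$ admitting a disintegration $d\mu(x,s)=d\mu(x|s)d\bar\mu(s)$ with $W_2(\mu(\cdot|s),\mu(\cdot|t))\le C|s-t|$. Continuity is for weak$^*$ $\times$ Euclidean topology. Masked measure $\mu_t=\frac{1_{[0,t]}}{\bar\mu([0,t])}\cdot\mu$ (which lies in $\mathrm{Lip}_C^\sigma(\tilde\Omega)$). Causal: $\Lambda(\mu,x,t)=\Lambda(\mu_t,x,t)$ for all $(\mu,x,t)$. Identifiable: for $\mu\in\mathrm{Lip}_C^\sigma(\tilde\Omega)$ and $t,t'\in[0,1]$, $\mu_t=\mu_{t'}$ implies $\Lambda(\mu_t,\cdot,t)=\Lambda(\mu_{t'},\cdot,t')$.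 *)

From HB Require Import structures.
From mathcomp Require Import all_boot all_order all_algebra.
From mathcomp Require Import all_classical all_reals all_analysis measurable_realfun.
Set Implicit Arguments. Unset Strict Implicit. Unset Printing Implicit Defensive.
Import Order.TTheory GRing.Theory Num.Theory.
Import numFieldNormedType.Exports.
Local Open Scope classical_set_scope.
Local Open Scope ring_scope.

Section ICL.
Context {R : realType}.

Definition eucl {n : nat} (x : 'rV[R]_n) : R :=
  Num.sqrt (\sum_(i < n) (x ord0 i) ^+ 2).

Definition BorelE (d : nat) := g_sigma_algebraType (@open ('rV[R]_d)).
Definition BorelE2 (d : nat) :=
  g_sigma_algebraType (@open ('rV[R]_d * 'rV[R]_d)%type).
Definition BorelPt (d : nat) :=
  g_sigma_algebraType (@open ('rV[R]_d * R)%type).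

Definition tOmega {d : nat} (Omega : set 'rV[R]_d) : set ('rV[R]_d * R) :=
  Omega `*` `[0, 1]%classic.

(* mu is a probability measure on Omega~ (a Borel probability on R^d x R
   concentrated on Omega~) *)
Definition supported_on {d : nat} (Omega : set 'rV[R]_d)
  (mu : probability (BorelPt d) R) : Prop :=
  mu (~` (tOmega Omega) : set (BorelPt d)) = 0%E.

Definition coupling {d : nat} (p q : probability (BorelE d) R)
  (g : probability (BorelE2 d) R) : Prop :=
  forall A : set (BorelE d), measurable A ->
    g (A `*` setT : set (BorelE2 d)) = p A /\
    g (setT `*` A : set (BorelE2 d)) = q A.

Definition W2sq {d : nat} (p q : probability (BorelE d) R) : \bar R :=
  ereal_inf [set c | exists g : probability (BorelE2 d) R,
     coupling p q g /\
     c = (\int[g]_z ((eucl (z.1 - z.2)) ^+ 2)%:E)%E].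

Definition W2 {d : nat} (p q : probability (BorelE d) R) : \bar R :=
  match W2sq p q with
  | r%:E => (Num.sqrt r)%:E
  | e => e
  end.

Definition tmarg {d : nat} (mu : probability (BorelPt d) R) (B : set R) : \bar R :=
  mu ([set p | B p.2] : set (BorelPt d)).

Definition LipCs {d : nat} (Omega : set 'rV[R]_d) (C sigma : R)
  : set (probability (BorelPt d) R) :=
  [set mu | supported_on Omega mu /\
     (sigma%:E <= tmarg mu [set 0%R])%E /\
     exists k : R -> probability (BorelE d) R,
       (* mu(.|s) is a probability measure on Omega *)
       (forall s, `[0, 1]%classic s -> k s (~` Omega) = 0%E) /\
       (forall A : set (BorelE d), measurable A ->
          measurable_fun [set: R] ((fun s => k s A) : R -> \bar R)) /\
       (* disintegration d mu(x,s) = d mu(x|s) d mubar(s) *)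
       (forall (A : set (BorelE d)) (B : set R), measurable A -> measurable B ->
          mu (A `*` B : set (BorelPt d)) =
          (\int[mu]_(p in ([set p | B p.2] : set (BorelPt d))) k p.2 A)%E) /\
       (forall s t, `[0, 1]%classic s -> `[0, 1]%classic t ->
          (W2 (k s) (k t) <= (C * `|s - t|)%:E)%E)].

Definition masked {d : nat} (mu : probability (BorelPt d) R) (t : R)
  (nu : probability (BorelPt d) R) : Prop :=
  forall A : set (BorelPt d), measurable A ->
    nu A = ((fine (mu (A `&` [set p | 0 <= p.2 <= t])))
             / fine (tmarg mu `[0, t]%classic))%:E.

Definition weak_cvg {d : nat} (mus : nat -> probability (BorelPt d) R)
  (mu : probability (BorelPt d) R) : Prop :=
  forall f : 'rV[R]_d * R -> R, continuous f ->
    (exists M : R, forall p, `|f p| <= M) ->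
    (fun k => \int[mus k]_p (f p)%:E)%E @ \oo -->
      (\int[mu]_p (f p)%:E)%E.

Definition icmap (d d' : nat) :=
  probability (BorelPt d) R -> 'rV[R]_d -> R -> 'rV[R]_d'.

(* continuity on Lip_C^sigma(Omega~) x Omega~ for weak-* x Euclidean topology
   (stated sequentially; the domain is metrizable) *)
Definition ic_continuous {d d' : nat} (Omega : set 'rV[R]_d) (C sigma : R)
  (L : icmap d d') : Prop :=
  forall (mus : nat -> probability (BorelPt d) R) (xs : nat -> 'rV[R]_d)
         (ts : nat -> R) mu x t,
    (forall k, LipCs Omega C sigma (mus k)) ->
    (forall k, tOmega Omega (xs k, ts k)) ->
    LipCs Omega C sigma mu -> tOmega Omega (x, t) ->
    weak_cvg mus mu -> xs @ \oo --> x -> ts @ \oo --> t ->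
    (fun k => L (mus k) (xs k) (ts k)) @ \oo --> L mu x t.

Definition ic_causal {d d' : nat} (Omega : set 'rV[R]_d) (C sigma : R)
  (L : icmap d d') : Prop :=
  forall mu x t nu,
    LipCs Omega C sigma mu -> tOmega Omega (x, t) ->
    LipCs Omega C sigma nu -> masked mu t nu ->
    L mu x t = L nu x t.

Definition ic_identifiable {d d' : nat} (Omega : set 'rV[R]_d) (C sigma : R)
  (L : icmap d d') : Prop :=
  forall mu t t' nu nu',
    LipCs Omega C sigma mu -> `[0, 1]%classic t -> `[0, 1]%classic t' ->
    LipCs Omega C sigma nu -> LipCs Omega C sigma nu' ->
    masked mu t nu -> masked mu t' nu' ->
    (forall A : set (BorelPt d), measurable A -> nu A = nu' A) ->
    forall x, Omega x -> L nu x t = L nu' x t'.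

Definition ic_supdist {d d' : nat} (Omega : set 'rV[R]_d) (C sigma : R)
  (L1 L2 : icmap d d') : \bar R :=
  ereal_sup [set e | exists mu x t, LipCs Omega C sigma mu /\ Omega x /\
     `[0, 1]%classic t /\ e = (eucl (L1 mu x t - L2 mu x t))%:E].

End ICL.

(* Identifiability is an equality between values of the map, and such an
   equality passes to uniform limits: Lambda*(nu, x, t) and Lambda*(nu', x, t')
   are both within eps of the common value Lambda_n(nu, x, t) =
   Lambda_n(nu', x, t') once n is large. *)
From HB Require Import structures.
From mathcomp Require Import all_boot all_order all_algebra.
From mathcomp Require Import all_classical all_reals all_analysis measurable_realfun.
Set Implicit Arguments. Unset Strict Implicit. Unset Printing Implicit Defensive.
Import Order.TTheory GRing.Theory Num.Theory.
Import numFieldNormedType.Exports.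
Local Open Scope classical_set_scope.
Local Open Scope ring_scope.

Lemma normr_coord_le_eucl (R : realType) n (v : 'rV[R]_n) j :
  `|v ord0 j| <= eucl v.
Proof.
rewrite /eucl -sqrtr_sqr; apply: ler_wsqrtr.
by rewrite (bigD1 j) //= lerDl; apply: sumr_ge0 => i _; exact: sqr_ge0.
Qed.

Lemma eq_of_common_approx (R : realFieldType) (a b : R) :
  (forall eps, 0 < eps -> exists c, `|c - a| < eps /\ `|c - b| < eps) -> a = b.
Proof.
move=> approx; apply/eqP; rewrite -subr_eq0 -normr_eq0; apply/negPn/negP => ab.
have ab_gt0 : 0 < `|a - b| by rewrite lt_def ab normr_ge0.
have [c [ca cb]] := approx (`|a - b| / 2) (divr_gt0 ab_gt0 (ltr0Sn _ 1)).
have : `|a - b| < `|a - b| / 2 + `|a - b| / 2.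
  rewrite distrC in ca; exact: le_lt_trans (ler_distD c a b) (ltrD ca cb).
by rewrite -splitr ltxx.
Qed.

Section UniformApproximation.
Variables (R : realType) (d d' : nat) (Omega : set 'rV[R]_d) (C sigma : R).

Lemma eucl_le_ic_supdist (L1 L2 : @icmap R d d') mu x t :
  LipCs Omega C sigma mu -> Omega x -> `[0, 1]%classic t ->
  ((eucl (L1 mu x t - L2 mu x t))%:E <= ic_supdist Omega C sigma L1 L2)%E.
Proof. by move=> Lmu Ox Tt; apply: ereal_sup_ubound; exists mu, x, t. Qed.

Lemma ic_supdist_cvg0_uniform (Ls : nat -> @icmap R d d') (L : @icmap R d d')
    eps : 0 < eps ->
  (fun n => ic_supdist Omega C sigma (Ls n) L) @ \oo --> 0%E ->
  exists N, forall mu x t j, LipCs Omega C sigma mu -> Omega x ->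
    `[0, 1]%classic t -> `|Ls N mu x t ord0 j - L mu x t ord0 j| < eps.
Proof.
move=> eps_gt0 supdist0.
have : \forall n \near \oo, (ic_supdist Omega C sigma (Ls n) L < eps%:E)%E.
  apply: (supdist0 (fun u => (u < eps%:E)%E)).
  by apply: open_ereal_lt'; rewrite lte_fin.
case=> N _ /(_ N (leqnn N)) /= supdistN.
exists N => mu x t j Lmu Ox Tt.
have := le_lt_trans (eucl_le_ic_supdist (Ls N) L Lmu Ox Tt) supdistN.
rewrite lte_fin; apply: le_lt_trans.
by have := @normr_coord_le_eucl R d' (Ls N mu x t - L mu x t) j; rewrite !mxE.
Qed.

End UniformApproximation.

Theorem lemmaC4 (R : realType) (d d' : nat) (Omega : set 'rV[R]_d)
  (C sigma : R) (Ls : nat -> @icmap R d d') (Lstar : @icmap R d d') :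
  compact Omega -> 0 < C -> 0 < sigma < 1 ->
  (forall n, ic_continuous Omega C sigma (Ls n)) ->
  (forall n, ic_causal Omega C sigma (Ls n)) ->
  (forall n, ic_identifiable Omega C sigma (Ls n)) ->
  ic_continuous Omega C sigma Lstar ->
  ic_causal Omega C sigma Lstar ->
  (fun n => ic_supdist Omega C sigma (Ls n) Lstar) @ \oo --> 0%E ->
  ic_identifiable Omega C sigma Lstar.
Proof.
move=> _ _ _ _ _ Ls_id _ _ supdist0 mu t t' nu nu' Lmu Tt Tt' Lnu Lnu' Mnu Mnu'
  nu_nu' x Ox.
apply/rowP => j; apply: eq_of_common_approx => eps eps_gt0.
have [N close] := ic_supdist_cvg0_uniform eps_gt0 supdist0.
exists (Ls N nu x t ord0 j); split; first exact: close.
rewrite (Ls_id N mu t t' nu nu' Lmu Tt Tt' Lnu Lnu' Mnu Mnu' nu_nu' x Ox).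
exact: close.
Qed.
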